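(* Let $X$ be an $n$-dimensional normed space over $\mathbb{K}\in\{\mathbb{R},\mathbb{C}\}$ and let $Y \subseteq X$ be a subspace of dimension $n-1$ satisfying $\lambda(Y, X)>1$. Let $T=\sum_{i=1}^{l}\alpha_i x_i \otimes f_i$ be a Chalmers–Metcalf operator for $Y$. If there is no non-zero $y \in Y$ with $f_i(y)=0$ for all $1 \leq i \leq l$, then the minimal projection $P: X \to Y$ is unique. In particular, the minimal projection is unique if the restriction $T|_Y:Y \to Y$ is invertible.
   Context: A projection onto $Y$ is a linear $P:X\to Y$ with $P|_Y=\mathrm{id}_Y$; $\lambda(Y,X)$ is the infimum of their operator norms and a minimal projection is one of norm $\lambda(Y,X)$. For $x\in X$, $f\in X^*$, $x\otimes f$ is the operator $z\mapsto f(z)x$. A Chalmers–Metcalf operator for $Y$ is an operator $T=\sum_{i=1}^{l}\alpha_i x_i\otimes f_i:X\to X$ with $(x_i,f_i)\in\mathrm{ext}\,B_X\times\mathrm{ext}\,B_{X^*}$, $\alpha_i>0$, $\sum_i\alpha_i=1$, $T(Y)\subseteq Y$, and $f_i(P_0(x_i))=\|P_0\|=\lambda(Y,X)$ for all $i$ and some fixed minimal projection $P_0:X\to Y$. *)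

(* Finite-dimensional normed spaces are modelled as
   'rV[K]_n equipped with an arbitrary norm N : 'rV[K]_n -> K. *)
From HB Require Import structures.
From mathcomp Require Import all_boot all_order all_algebra.
From mathcomp Require Import reals complex.
Set Implicit Arguments. Unset Strict Implicit. Unset Printing Implicit Defensive.
Import Order.TTheory GRing.Theory Num.Theory.
Local Open Scope ring_scope.

Section Defs.
Variables (K : numFieldType) (n : nat).

(* N is a norm on X = K^n (values are nonnegative, hence real, elements of K) *)
Definition is_norm (N : 'rV[K]_n -> K) : Prop :=
  [/\ forall x, 0 <= N x,
      forall x, N x = 0 -> x = 0,
      forall (a : K) x, N (a *: x) = `|a| * N x
    & forall x y, N (x + y) <= N x + N y].

Definition ballX (N : 'rV[K]_n -> K) (x : 'rV[K]_n) : Prop := N x <= 1.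

(* a functional f in X^* is represented by a column vector: f(z) = (z *m f) 0 0 *)
Definition app (f : 'cV[K]_n) (z : 'rV[K]_n) : K := (z *m f) 0 0.

Definition ballXs (N : 'rV[K]_n -> K) (f : 'cV[K]_n) : Prop :=
  forall z, N z <= 1 -> `|app f z| <= 1.

(* extreme points of a subset S of a K-vector space (0 < t < 1 forces t real) *)
Definition extreme (V : lmodType K) (S : V -> Prop) (x : V) : Prop :=
  S x /\ forall (y z : V) (t : K), S y -> S z -> 0 < t < 1 ->
    x = t *: y + (1 - t) *: z -> y = z.

(* operators X -> X are matrices acting on the right of row vectors *)
(* x (x) f : z |-> f(z) x *)
Definition tens (x : 'rV[K]_n) (f : 'cV[K]_n) : 'M[K]_n := f *m x.

Definition opnorm_bound (N : 'rV[K]_n -> K) (A : 'M[K]_n) (d : K) : Prop :=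
  forall x, N x <= 1 -> N (x *m A) <= d.
Definition is_opnorm (N : 'rV[K]_n -> K) (A : 'M[K]_n) (c : K) : Prop :=
  opnorm_bound N A c /\ forall d, opnorm_bound N A d -> c <= d.

Definition projection (Y P : 'M[K]_n) : Prop :=
  (P <= Y)%MS /\ forall y : 'rV[K]_n, (y <= Y)%MS -> y *m P = y.

Definition is_lambda (N : 'rV[K]_n -> K) (Y : 'M[K]_n) (l : K) : Prop :=
  (forall P c, projection Y P -> is_opnorm N P c -> l <= c) /\
  (forall d, (forall P c, projection Y P -> is_opnorm N P c -> d <= c) -> d <= l).

Definition minimal_projection (N : 'rV[K]_n -> K) (Y P : 'M[K]_n) : Prop :=
  projection Y P /\ exists l, is_lambda N Y l /\ is_opnorm N P l.

Definition chalmers_metcalf (N : 'rV[K]_n -> K) (Y : 'M[K]_n) (l : nat)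
    (alpha : 'I_l -> K) (xs : 'I_l -> 'rV[K]_n) (fs : 'I_l -> 'cV[K]_n)
    (P0 : 'M[K]_n) : Prop :=
  (forall i, extreme (ballX N) (xs i)) /\
  (forall i, extreme (ballXs N) (fs i)) /\
  (forall i, 0 < alpha i) /\
  \sum_(i < l) alpha i = 1 /\
  (Y *m (\sum_(i < l) alpha i *: tens (xs i) (fs i)) <= Y)%MS /\
  minimal_projection N Y P0 /\
  (exists c, [/\ is_opnorm N P0 c, is_lambda N Y c &
        forall i, app (fs i) (xs i *m P0) = c]).

End Defs.

(* Let P be a minimal projection and D = P - P0. Since D vanishes on the
   hyperplane Y and maps into Y, it is determined by d = w D for any w outside
   Y: writing x_i = y_i + t_i w, we get x_i D = t_i d with t_i <> 0 (because
   |f_i(P0 x_i)| = lambda > 1, x_i is not in Y).  Invariance of Y under T gives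
   0 = (d T) D = (sum_i alpha_i t_i f_i(d)) d.  If d <> 0 the sum vanishes, so
   sum_i alpha_i f_i(P x_i) = lambda + sum_i alpha_i t_i f_i(d) = lambda while
   |f_i(P x_i)| <= ||P|| = lambda; in R or C this forces f_i(P x_i) = lambda,
   i.e. f_i(d) = 0 for every i, contradicting the hypothesis.  Hence d = 0 and
   P = P0. *)
From HB Require Import structures.
From mathcomp Require Import all_boot all_order all_algebra.
From mathcomp Require Import reals complex.
From mathcomp Require Import zify.
Set Implicit Arguments. Unset Strict Implicit. Unset Printing Implicit Defensive.
Import Order.TTheory GRing.Theory Num.Theory.
Local Open Scope ring_scope.

(* The only property of K \in {R, C} that the proof uses. *)
Definition convex_mean_rigid (K : numFieldType) : Prop :=
  forall (l : nat) (a z : 'I_l -> K) (c : K),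
  (forall i, 0 < a i) -> \sum_(i < l) a i = 1 ->
  (forall i, `|z i| <= c) -> \sum_(i < l) a i * z i = c -> forall i, z i = c.

Lemma convex_mean_rigid_real (F : realFieldType) : convex_mean_rigid F.
Proof.
move=> l a z c a_gt0 a_sum z_le z_mean i.
have a_gap0 j : a j * (c - z j) = 0.
  apply: (@psumr_eq0P F _ xpredT (fun j => a j * (c - z j))) => //.
    move=> k _; rewrite mulr_ge0 ?(ltW (a_gt0 k)) // subr_ge0.
    exact: le_trans (ler_norm _) (z_le k).
  under eq_bigr do rewrite mulrBr.
  by rewrite sumrB z_mean -mulr_suml a_sum mul1r subrr.
by move/eqP: (a_gap0 i); rewrite mulf_eq0 gt_eqF //= subr_eq0 => /eqP.
Qed.

Lemma convex_mean_rigid_closed (C : numClosedFieldType) : convex_mean_rigid C.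
Proof.
move=> l a z c a_gt0 a_sum z_le z_mean i.
have az_eq j : a j * z j = a j * c.
  apply: (@normC_sum_upper C _ xpredT (fun j => a j * z j) (fun j => a j * c)) => //.
    by move=> k _; rewrite normrM gtr0_norm // ler_pM2l.
  by rewrite z_mean -mulr_suml a_sum mul1r.
exact: mulfI (lt0r_neq0 (a_gt0 i)) _ _ (az_eq i).
Qed.

Lemma convex_mean_rigid_RC (R : realType) (K : numFieldType) :
  K = (R : numFieldType) \/ K = (R[i] : numFieldType) -> convex_mean_rigid K.
Proof. by case=> ->; [exact: convex_mean_rigid_real | exact: convex_mean_rigid_closed]. Qed.

Section Projections.
Variables (K : numFieldType) (n : nat).

Lemma appD (f : 'cV[K]_n) z1 z2 : app f (z1 + z2) = app f z1 + app f z2.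
Proof. by rewrite /app mulmxDl mxE. Qed.

Lemma appZ (f : 'cV[K]_n) (k : K) z : app f (k *: z) = k * app f z.
Proof. by rewrite /app -scalemxAl mxE. Qed.

Lemma mulmx_tens (z x : 'rV[K]_n) (f : 'cV[K]_n) : z *m tens x f = app f z *: x.
Proof. by rewrite /tens mulmxA [z *m f]mx11_scalar mul_scalar_mx. Qed.

Lemma mulmx_sum_tens_eq0 (l : nat) (alpha : 'I_l -> K) (xs : 'I_l -> 'rV[K]_n)
    (fs : 'I_l -> 'cV[K]_n) (z : 'rV[K]_n) :
  (forall i, app (fs i) z = 0) ->
  z *m \sum_(i < l) alpha i *: tens (xs i) (fs i) = 0.
Proof.
move=> fz0; rewrite mulmx_sumr big1 // => i _.
by rewrite -scalemxAr mulmx_tens fz0 scale0r scaler0.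
Qed.

Lemma norm_app_le (N : 'rV[K]_n -> K) (f : 'cV[K]_n) z (c : K) :
  is_norm N -> ballXs N f -> 0 < c -> N z <= c -> `|app f z| <= c.
Proof.
move=> [_ _ NZ _] f_ball c_gt0 Nz_le.
have c_neq0 : c != 0 by rewrite gt_eqF.
have := f_ball (c^-1 *: z).
rewrite appZ NZ !normrM normfV (gtr0_norm c_gt0) -[1](mulVf c_neq0).
by rewrite !ler_pM2l ?invr_gt0 //; apply.
Qed.

Lemma is_lambda_uniq (N : 'rV[K]_n -> K) (Y : 'M[K]_n) a b :
  is_lambda N Y a -> is_lambda N Y b -> a = b.
Proof. by move=> [a1 a2] [b1 b2]; apply/le_anti; rewrite (b2 _ a1) (a2 _ b1). Qed.

Lemma projection_app_gt1_notsub (N : 'rV[K]_n -> K) (Y P : 'M[K]_n) x f :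
  projection Y P -> N x <= 1 -> ballXs N f -> 1 < `|app f (x *m P)| ->
  ~~ (x <= Y)%MS.
Proof.
move=> [_ P_id] Nx_le f_ball; apply: contraTN => xY.
rewrite P_id //; apply/negP => app_gt1.
by have := lt_le_trans app_gt1 (f_ball _ Nx_le); rewrite ltxx.
Qed.

Lemma projectionB_vanish (Y P Q : 'M[K]_n) :
  projection Y P -> projection Y Q ->
  forall y : 'rV[K]_n, (y <= Y)%MS -> y *m (P - Q) = 0.
Proof. by move=> [_ P_id] [_ Q_id] y yY; rewrite mulmxBr P_id // Q_id // subrr. Qed.

Lemma projectionB_sub (Y P Q : 'M[K]_n) (x : 'rV[K]_n) :
  projection Y P -> projection Y Q -> (x *m (P - Q) <= Y)%MS.
Proof.
move=> [PY _] [QY _]; rewrite mulmxBr addmx_sub //.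
  exact: submx_trans (submxMl _ _) PY.
by rewrite -scaleN1r scalemx_sub // (submx_trans (submxMl _ _) QY).
Qed.

Lemma hyperplane_coord (Y : 'M[K]_n) (w x : 'rV[K]_n) :
  \rank Y = n.-1 -> ~~ (w <= Y)%MS -> exists t, (x - t *: w <= Y)%MS.
Proof.
move=> rankY wY.
have Yw_full : row_full (Y + w)%MS.
  have Y_lt : (Y < Y + w)%MS.
    by rewrite ltmxE addsmxSl; apply: contra wY; apply: submx_trans (addsmxSr _ _).
  have := rank_ltmx Y_lt; have := rank_leq_col (Y + w)%MS.
  by rewrite /row_full rankY; lia.
have /sub_addsmxP [[u v] /= ->] := submx_full x Yw_full.
exists (v 0 0); rewrite {1}[v]mx11_scalar mul_scalar_mx addrK.
exact: submxMl.
Qed.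

Lemma mulmx_hyperplane_coord (Y D : 'M[K]_n) (w x : 'rV[K]_n) (t : K) :
  (forall y : 'rV[K]_n, (y <= Y)%MS -> y *m D = 0) -> (x - t *: w <= Y)%MS ->
  x *m D = t *: (w *m D).
Proof.
by move=> D_vanish xtY; rewrite -(subrK (t *: w) x) mulmxDl D_vanish // add0r scalemxAl.
Qed.

Lemma hyperplane_vanish_eq0 (Y D : 'M[K]_n) (w : 'rV[K]_n) :
  \rank Y = n.-1 -> ~~ (w <= Y)%MS ->
  (forall y : 'rV[K]_n, (y <= Y)%MS -> y *m D = 0) -> w *m D = 0 -> D = 0.
Proof.
move=> rankY wY D_vanish wD0; apply/row_matrixP => j.
have [t ejY] := hyperplane_coord (row j 1%:M) rankY wY.
by rewrite row0 -[D]mul1mx row_mul (mulmx_hyperplane_coord D_vanish ejY) wD0 scaler0.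
Qed.

End Projections.

Section ChalmersMetcalf.
Variables (K : numFieldType) (n : nat) (N : 'rV[K]_n -> K) (Y P0 : 'M[K]_n).
Variables (l : nat) (alpha : 'I_l -> K) (xs : 'I_l -> 'rV[K]_n) (fs : 'I_l -> 'cV[K]_n).
Variable lam : K.
Hypotheses (normN : is_norm N) (rankY : \rank Y = n.-1) (lam_gt1 : 1 < lam).
Hypotheses (xs_ball : forall i, N (xs i) <= 1) (fs_ball : forall i, ballXs N (fs i)).
Hypotheses (alpha_gt0 : forall i, 0 < alpha i) (alpha_sum : \sum_(i < l) alpha i = 1).
Hypothesis T_Y : (Y *m \sum_(i < l) alpha i *: tens (xs i) (fs i) <= Y)%MS.
Hypotheses (P0_proj : projection Y P0) (fs_P0 : forall i, app (fs i) (xs i *m P0) = lam).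
Hypothesis rigidK : convex_mean_rigid K.

Lemma xs_notsub i : ~~ (xs i <= Y)%MS.
Proof.
apply: projection_app_gt1_notsub P0_proj (xs_ball i) (fs_ball i) _.
by rewrite fs_P0 gtr0_norm // (lt_trans ltr01).
Qed.

Lemma weights_nonempty : (0 < l)%N.
Proof.
by case: l alpha alpha_sum => // a; rewrite big_ord0 => /eqP; rewrite eq_sym oner_eq0.
Qed.

Section Difference.
Variables (P : 'M[K]_n) (w : 'rV[K]_n) (t : 'I_l -> K).
Hypotheses (P_proj : projection Y P) (P_bound : opnorm_bound N P lam).
Hypothesis (xs_coord : forall i, (xs i - t i *: w <= Y)%MS).

Let d := w *m (P - P0).

Lemma xs_mulmxB i : xs i *m (P - P0) = t i *: d.
Proof. exact: mulmx_hyperplane_coord (projectionB_vanish P_proj P0_proj) (xs_coord i). Qed.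

Lemma coord_neq0 i : t i != 0.
Proof.
apply: contra (xs_notsub i) => /eqP t0.
by have := xs_coord i; rewrite t0 scale0r subr0.
Qed.

Lemma fs_P_xs i : app (fs i) (xs i *m P) = lam + t i * app (fs i) d.
Proof. by rewrite -(subrK P0 P) mulmxDr appD fs_P0 xs_mulmxB appZ addrC. Qed.

(* Apply P - P0 to d T, which lies in Y. *)
Lemma mean_coord_scale_eq0 :
  (\sum_(i < l) alpha i * (t i * app (fs i) d)) *: d = 0.
Proof.
have dT_Y := submx_trans (submxMr _ (projectionB_sub w P_proj P0_proj)) T_Y.
rewrite -(projectionB_vanish P_proj P0_proj dT_Y) mulmx_sumr mulmx_suml scaler_suml.
apply: eq_bigr => i _.
rewrite -scalemxAr mulmx_tens -!scalemxAl xs_mulmxB !scalerA.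
by rewrite [t i * _]mulrC mulrA.
Qed.

Lemma fs_P_xs_eq (mean0 : \sum_(i < l) alpha i * (t i * app (fs i) d) = 0) i :
  app (fs i) (xs i *m P) = lam.
Proof.
have lam_gt0 : 0 < lam := lt_trans ltr01 lam_gt1.
apply: (rigidK (z := fun j => app (fs j) (xs j *m P)) alpha_gt0 alpha_sum) => [j|].
  exact: norm_app_le normN (fs_ball j) lam_gt0 (P_bound (xs_ball j)).
under eq_bigr do rewrite fs_P_xs mulrDr.
by rewrite big_split /= mean0 addr0 -mulr_suml alpha_sum mul1r.
Qed.

Lemma fs_d_eq0 (mean0 : \sum_(i < l) alpha i * (t i * app (fs i) d) = 0) i :
  app (fs i) d = 0.
Proof.
have := fs_P_xs_eq mean0 i; rewrite fs_P_xs -[RHS]addr0 => /addrI/eqP.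
by rewrite mulf_eq0 (negbTE (coord_neq0 i)) => /eqP.
Qed.

End Difference.

Lemma projection_eq_of_no_common_zero P :
  projection Y P -> opnorm_bound N P lam ->
  ~ (exists y, [/\ (y <= Y)%MS, y != 0 & forall i, app (fs i) y = 0]) -> P = P0.
Proof.
move=> P_proj P_bound no_zero.
pose w := xs (Ordinal weights_nonempty).
have wY : ~~ (w <= Y)%MS := xs_notsub _.
have [t xs_coord] := fin_all_exists (fun i => hyperplane_coord (xs i) rankY wY).
apply: subr0_eq.
apply: (hyperplane_vanish_eq0 rankY wY (projectionB_vanish P_proj P0_proj)).
apply/eqP/negPn/negP => d_neq0; apply: no_zero.
exists (w *m (P - P0)); split => //; first exact: projectionB_sub.
have /eqP := mean_coord_scale_eq0 P_proj xs_coord.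
rewrite scaler_eq0 (negbTE d_neq0) orbF => /eqP mean0.
exact: fs_d_eq0 P_proj P_bound xs_coord mean0.
Qed.

End ChalmersMetcalf.

Lemma chalmers_metcalf_minimal_projection_eq (K : numFieldType) (n : nat)
    (N : 'rV[K]_n -> K) (Y : 'M[K]_n) (l : nat) (alpha : 'I_l -> K)
    (xs : 'I_l -> 'rV[K]_n) (fs : 'I_l -> 'cV[K]_n) (P0 P : 'M[K]_n) :
  convex_mean_rigid K -> is_norm N -> \rank Y = n.-1 ->
  (exists lam, is_lambda N Y lam /\ 1 < lam) ->
  chalmers_metcalf N Y alpha xs fs P0 ->
  ~ (exists y, [/\ (y <= Y)%MS, y != 0 & forall i, app (fs i) y = 0]) ->
  minimal_projection N Y P -> P = P0.
Proof.
move=> rigidK normN rankY [lam [lamY lam_gt1]].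
move=> [xs_ext [fs_ext [alpha_gt0 [alpha_sum [T_Y [[P0_proj _] [c [_ lamY_c fs_P0]]]]]]]].
move=> no_zero [P_proj [c' [lamY_c' [P_bound _]]]].
rewrite (is_lambda_uniq lamY_c lamY) in fs_P0.
rewrite (is_lambda_uniq lamY_c' lamY) in P_bound.
apply: (projection_eq_of_no_common_zero normN rankY lam_gt1 _ _ alpha_gt0 alpha_sum
  T_Y P0_proj fs_P0 rigidK P_proj P_bound no_zero).
- by move=> i; case: (xs_ext i).
- by move=> i; case: (fs_ext i).
Qed.

Theorem mainTheorem17 (R : realType) (K : numFieldType)
    (HK : K = (R : numFieldType) \/ K = (R[i] : numFieldType))
    (n : nat) (N : 'rV[K]_n -> K) (Y : 'M[K]_n)
    (l : nat) (alpha : 'I_l -> K) (xs : 'I_l -> 'rV[K]_n) (fs : 'I_l -> 'cV[K]_n)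
    (P0 : 'M[K]_n) :
  (0 < n)%N ->
  is_norm N ->
  \rank Y = n.-1 ->
  (exists lam, is_lambda N Y lam /\ 1 < lam) ->
  chalmers_metcalf N Y alpha xs fs P0 ->
  let T := \sum_(i < l) alpha i *: tens (xs i) (fs i) in
  ((~ exists y : 'rV[K]_n, [/\ (y <= Y)%MS, y != 0 & forall i, app (fs i) y = 0]) ->
     forall P Q, minimal_projection N Y P -> minimal_projection N Y Q -> P = Q)
  /\
  (((forall y : 'rV[K]_n, (y <= Y)%MS -> exists2 z : 'rV[K]_n, (z <= Y)%MS & z *m T = y) /\
    (forall z1 z2 : 'rV[K]_n, (z1 <= Y)%MS -> (z2 <= Y)%MS -> z1 *m T = z2 *m T -> z1 = z2)) ->
     forall P Q, minimal_projection N Y P -> minimal_projection N Y Q -> P = Q).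
Proof.
move=> _ normN rankY lambda_gt1 CM T.
have minimal_eq := chalmers_metcalf_minimal_projection_eq
  (convex_mean_rigid_RC HK) normN rankY lambda_gt1 CM.
split=> [no_zero | [_ T_inj]] P Q minP minQ.
  by rewrite (minimal_eq P no_zero minP) (minimal_eq Q no_zero minQ).
suff no_zero : ~ exists y : 'rV[K]_n,
    [/\ (y <= Y)%MS, y != 0 & forall i, app (fs i) y = 0].
  by rewrite (minimal_eq P no_zero minP) (minimal_eq Q no_zero minQ).
move=> [y [yY /eqP y_neq0 fs_y]]; apply: y_neq0.
by apply: T_inj; rewrite ?sub0mx // mul0mx mulmx_sum_tens_eq0.
Qed.
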